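(* Let $U\subset\mathbb{C}$ be simply connected and let $F,G$ be holomorphic on $U$ with $F$ nowhere zero. Put $\phi=(F,\mathrm{i}F,-FG)$, and for $\theta\in\mathbb{R}$ let $$\mathbf{x}_\theta(z)=\cos\theta\,\mathrm{Re}\int_{z_0}^z\phi\,\mathrm{d}w+\sin\theta\,\mathrm{Im}\int_{z_0}^z\phi\,\mathrm{d}w=\mathrm{Re}\int_{z_0}^z\mathrm{e}^{-\mathrm{i}\theta}\phi\,\mathrm{d}w.$$ Then: (i) All $\mathbf{x}_\theta$ have the same first fundamental form $|F|^2|\mathrm{d}z|^2$. (ii) At a point $z$, the direction $\mathbf{v}=v_1\partial_u+v_2\partial_v$ is asymptotic for $\mathbf{x}_\theta$ if and only if $\mathrm{e}^{-\mathrm{i}\theta}F(z)G'(z)(v_1+\mathrm{i}v_2)^2\in\mathrm{i}\mathbb{R}$. (iii) At a point $z$ where $F(z)G'(z)\neq0$, the direction $\mathbf{v}$ is a principal direction of $\mathbf{x}_\theta$ if and only if $\mathrm{e}^{-\mathrm{i}\theta}F(z)G'(z)(v_1+\mathrm{i}v_2)^2\in\mathbb{R}$. (iv) Consequently, at such points, asymptotic directions of $\mathbf{x}_\theta$ are principal directions of the conjugate surface $\mathbf{x}_{\theta+\pi/2}$, and principal directions of $\mathbf{x}_\theta$ are asymptotic directions of $\mathbf{x}_{\theta+\pi/2}$.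
   Context: $\mathbb{I}^3$ is $\mathbb{R}^3$ with the degenerate metric $\langle a,b\rangle=a^1b^1+a^2b^2$, and $z=u+\mathrm{i}v$. The first fundamental form has coefficients $g_{ij}=\langle\mathbf{x}_i,\mathbf{x}_j\rangle$. The minimal normal $\mathbf{N}_m$ is the unique vector $(a,b,1)$ that is Euclidean-orthogonal to $\mathbf{x}_u,\mathbf{x}_v$, and the second fundamental form has coefficients $h_{ij}=\mathbf{x}_{ij}\cdot\mathbf{N}_m$. A direction $\mathbf{v}$ is asymptotic if $\mathrm{II}(\mathbf{v},\mathbf{v})=0$. It is principal if it is an eigenvector of the shape operator $g^{-1}h$, i.e. a critical direction of $\mathrm{II}(\mathbf{v},\mathbf{v})/\mathrm{I}(\mathbf{v},\mathbf{v})$. The surface $\mathbf{x}_{\theta+\pi/2}$ is called the conjugate of $\mathbf{x}_\theta$. *)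

From Stdlib Require Import Reals ClassicalEpsilon.
From Coquelicot Require Export Coquelicot.
Open Scope R_scope.

Definition vec3 := (R * R * R)%type.
Definition v1c (a : vec3) : R := fst (fst a).
Definition v2c (a : vec3) : R := snd (fst a).
Definition v3c (a : vec3) : R := snd a.

Definition edot (a b : vec3) : R := v1c a * v1c b + v2c a * v2c b + v3c a * v3c b.
(* degenerate isotropic metric of I^3 *)
Definition idot (a b : vec3) : R := v1c a * v1c b + v2c a * v2c b.

Definition holomorphic_on (U : C -> Prop) (f : C -> C) : Prop :=
  forall z, U z -> ex_derive (K := C_AbsRing) f z.

Definition pu (x : R -> R -> vec3) : R -> R -> vec3 := fun u v =>
  (Derive (fun t => v1c (x t v)) u, Derive (fun t => v2c (x t v)) u,
   Derive (fun t => v3c (x t v)) u).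
Definition pv (x : R -> R -> vec3) : R -> R -> vec3 := fun u v =>
  (Derive (fun t => v1c (x u t)) v, Derive (fun t => v2c (x u t)) v,
   Derive (fun t => v3c (x u t)) v).

Definition g11 x u v := idot (pu x u v) (pu x u v).
Definition g12 x u v := idot (pu x u v) (pv x u v).
Definition g22 x u v := idot (pv x u v) (pv x u v).

Definition is_minimal_normal (x : R -> R -> vec3) (u v : R) (N : vec3) : Prop :=
  v3c N = 1 /\ edot N (pu x u v) = 0 /\ edot N (pv x u v) = 0.
Definition minimal_normal (x : R -> R -> vec3) (u v : R) : vec3 :=
  epsilon (inhabits ((0, 0, 1) : vec3)) (is_minimal_normal x u v).

Definition h11 x u v := edot (pu (pu x) u v) (minimal_normal x u v).
Definition h12 x u v := edot (pv (pu x) u v) (minimal_normal x u v).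
Definition h22 x u v := edot (pv (pv x) u v) (minimal_normal x u v).

Definition II x u v (a b : R) : R :=
  h11 x u v * a ^ 2 + 2 * h12 x u v * a * b + h22 x u v * b ^ 2.

Definition asymptotic x u v (a b : R) : Prop := II x u v a b = 0.

(* shape operator S = g^{-1} h, written out entrywise *)
Definition detg x u v := g11 x u v * g22 x u v - g12 x u v ^ 2.
Definition S11 x u v := (g22 x u v * h11 x u v - g12 x u v * h12 x u v) / detg x u v.
Definition S12 x u v := (g22 x u v * h12 x u v - g12 x u v * h22 x u v) / detg x u v.
Definition S21 x u v := (- g12 x u v * h11 x u v + g11 x u v * h12 x u v) / detg x u v.
Definition S22 x u v := (- g12 x u v * h12 x u v + g11 x u v * h22 x u v) / detg x u v.

Definition principal x u v (a b : R) : Prop :=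
  (a, b) <> (0, 0) /\
  exists lam : R, S11 x u v * a + S12 x u v * b = lam * a /\
                  S21 x u v * a + S22 x u v * b = lam * b.

(* x_theta(u,v) = cos th Re Phi(z) + sin th Im Phi(z),  z = u + i v,
   where Phi = (P1,P2,P3) is a primitive of phi *)
Definition xsurf (th : R) (P1 P2 P3 : C -> C) : R -> R -> vec3 := fun u v =>
  (cos th * Re (P1 (u, v)) + sin th * Im (P1 (u, v)),
   cos th * Re (P2 (u, v)) + sin th * Im (P2 (u, v)),
   cos th * Re (P3 (u, v)) + sin th * Im (P3 (u, v))).

Definition emi (th : R) : C := (cos th, - sin th).

From Stdlib Require Import Reals Lra ClassicalEpsilon.
From Coquelicot Require Import Coquelicot.
Open Scope R_scope.

(* Write proj th w = cos th Re w + sin th Im w = Re (e^{-i th} w),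
   so that every coordinate of x_th is proj th P_k for a holomorphic primitive P_k.
   A complex derivative q of P at z = u + iv yields the real partial derivatives
   d_u (proj th P) = proj th q and d_v (proj th P) = proj th (i q); iterating on the
   derivatives phi = (F, iF, -FG) gives the whole 2-jet of x_th at z (SurfaceJet).
   From this jet:
   - the horizontal parts of x_u, x_v are (A, B) and (B, -A) with A^2 + B^2 = |F|^2,
     whence g = |F|^2 Id, and the minimal normal is forced to be (Re G, Im G, 1);
   - with K = e^{-i th} F G', the second fundamental form is
     h11 = -Re K, h12 = Im K, h22 = Re K (fundamental_forms).
   The rest is algebra: II(a,b) = -Re (K (a+ib)^2), and for a conformal metric the
   eigenvector condition for g^{-1} h reduces to the cross condition (h v) x v = 0,
   whose left side is -Im (K (a+ib)^2).  Finally e^{-i(th+pi/2)} = -i e^{-i th}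
   exchanges Re and Im, giving the duality (iv) between x_th and its conjugate. *)

(* Coquelicot has two normed-module structures on C; complex derivatives agree.
   Needed to use the generic product rule, stated for AbsRing_NormedModule. *)
Lemma is_derive_C_module (f : C -> C) (z l : C) :
  @is_derive C_AbsRing C_NormedModule f z l <->
  @is_derive C_AbsRing (AbsRing_NormedModule C_AbsRing) f z l.
Proof.
split; intros [_ D]; (split; [apply is_linear_scal_l|]);
  intros w Hw eps; generalize (D w Hw eps); apply filter_imp; easy.
Qed.

Lemma is_derive_C_Ci_mult (f : C -> C) (z l : C) :
  is_derive (K := C_AbsRing) f z l ->
  is_derive (K := C_AbsRing) (fun w => Ci * f w)%C z (Ci * l)%C.
Proof.
intros Hf; apply is_derive_C_module.
replace (Ci * l)%C with (plus (mult (RtoC 0) (f z)) (mult Ci l))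
  by (change ((0 * f z + Ci * l)%C = (Ci * l)%C); ring).
exact (is_derive_mult (fun _ => Ci) f z _ _ (is_derive_const _ _)
  (proj1 (is_derive_C_module _ _ _) Hf) Cmult_comm).
Qed.

Lemma is_derive_C_opp_mult (f g : C -> C) (z l m : C) :
  is_derive (K := C_AbsRing) f z l -> is_derive (K := C_AbsRing) g z m ->
  is_derive (K := C_AbsRing) (fun w => - (f w * g w))%C z (- (l * g z + f z * m))%C.
Proof.
intros Hf Hg; apply is_derive_C_module.
exact (is_derive_opp _ _ _ (is_derive_mult f g z l m
  (proj1 (is_derive_C_module _ _ _) Hf) (proj1 (is_derive_C_module _ _ _) Hg) Cmult_comm)).
Qed.

Lemma Rabs_Re_le_Cmod (w : C) : Rabs (Re w) <= Cmod w.
Proof.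
unfold Re, Im; pose proof (Rmax_Cmod w).
pose proof (Rmax_l (Rabs (fst w)) (Rabs (snd w))); lra.
Qed.

Lemma Rabs_Im_le_Cmod (w : C) : Rabs (Im w) <= Cmod w.
Proof.
unfold Re, Im; pose proof (Rmax_Cmod w).
pose proof (Rmax_r (Rabs (fst w)) (Rabs (snd w))); lra.
Qed.

Lemma is_derive_along_line (f : C -> C) (z l d : C) (p : R -> C) (t0 : R) :
  Cmod d = 1 -> p t0 = z -> (forall t, (p t - z)%C = (RtoC (t - t0) * d)%C) ->
  is_derive (K := C_AbsRing) f z l ->
  is_derive (fun t => Re (f (p t))) t0 (Re (d * l)) /\
  is_derive (fun t => Im (f (p t))) t0 (Im (d * l)).
Proof.
intros Hd Hp0 Hp [_ Hf].
specialize (Hf z (fun P H => H)).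
assert (Hline : forall eps : posreal, exists delta : posreal, forall t,
  Rabs (t - t0) < delta ->
  Cmod (f (p t) - f z - RtoC (t - t0) * (d * l))%C <= eps * Rabs (t - t0)).
{ intros eps; destruct (Hf eps) as [delta Hdelta]; exists delta; intros t Ht.
  assert (Hclose : Cmod (p t - z)%C < delta)
    by (rewrite Hp, Cmod_mult, Hd, Cmod_R, Rmult_1_r; exact Ht).
  specialize (Hdelta (p t) Hclose).
  change (Cmod (f (p t) - f z - (p t - z) * l)%C <= eps * Cmod (p t - z)%C) in Hdelta.
  rewrite Hp, Cmod_mult, Hd, Cmod_R, Rmult_1_r, <- Cmult_assoc in Hdelta.
  exact Hdelta. }
split; (split; [apply is_linear_scal_l|]); intros x Hx;
  apply (is_filter_lim_locally_unique (K := R_AbsRing)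
           (V := AbsRing_NormedModule R_AbsRing)) in Hx; subst x;
  intros eps; destruct (Hline eps) as [delta Hdelta]; exists delta; intros t Ht;
  specialize (Hdelta t Ht).
- change (norm (minus t t0)) with (Rabs (t - t0)).
  eapply Rle_trans; [|exact Hdelta]; eapply Rle_trans; [|apply Rabs_Re_le_Cmod].
  right; rewrite Hp0; change (Rabs ((Re (f (p t)) - Re (f z)) - (t - t0) * Re (d * l))
    = Rabs (Re (f (p t) - f z - RtoC (t - t0) * (d * l))%C)).
  f_equal; unfold Re, Im; simpl; ring.
- change (norm (minus t t0)) with (Rabs (t - t0)).
  eapply Rle_trans; [|exact Hdelta]; eapply Rle_trans; [|apply Rabs_Im_le_Cmod].
  right; rewrite Hp0; change (Rabs ((Im (f (p t)) - Im (f z)) - (t - t0) * Im (d * l))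
    = Rabs (Im (f (p t) - f z - RtoC (t - t0) * (d * l))%C)).
  f_equal; unfold Re, Im; simpl; ring.
Qed.

(* The real coordinate Re (e^{-i th} w), in the form used by xsurf. *)
Definition proj (th : R) (w : C) : R := cos th * Re w + sin th * Im w.

Lemma proj_Ci_Ci (th : R) (w : C) : proj th (Ci * (Ci * w)) = - proj th w.
Proof. unfold proj, Ci, Re, Im; simpl; ring. Qed.

(* proj th w and -proj th (i w) are the two coordinates of e^{-i th} w. *)
Lemma proj_pair_norm (th : R) (w : C) :
  proj th w ^ 2 + proj th (Ci * w) ^ 2 = Cmod w ^ 2.
Proof.
rewrite Cmod2_alt; unfold proj, Ci, Re, Im; destruct w as [w1 w2]; simpl.
transitivity ((cos th ^ 2 + sin th ^ 2) * (w1 ^ 2 + w2 ^ 2)); [ring|].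
rewrite <- (sin2_cos2 th); unfold Rsqr; ring.
Qed.

Lemma is_derive_proj_along_line (f : C -> C) (z l d : C) (p : R -> C) (t0 th : R) :
  Cmod d = 1 -> p t0 = z -> (forall t, (p t - z)%C = (RtoC (t - t0) * d)%C) ->
  is_derive (K := C_AbsRing) f z l ->
  is_derive (fun t => proj th (f (p t))) t0 (proj th (d * l)).
Proof.
intros Hd Hp0 Hp Hf.
destruct (is_derive_along_line f z l d p t0 Hd Hp0 Hp Hf) as [HRe HIm].
apply (is_derive_plus (fun t => cos th * Re (f (p t))) (fun t => sin th * Im (f (p t))));
  now apply is_derive_scal.
Qed.

(* The two first partials of proj th P, from the lines d = 1 and d = i. *)
Lemma Derive_u_proj (P : C -> C) (q : C) (th u v : R) :
  is_derive (K := C_AbsRing) P (u, v) q ->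
  Derive (fun t => proj th (P (t, v))) u = proj th q.
Proof.
intros HP; apply is_derive_unique.
replace (proj th q) with (proj th (RtoC 1 * q)) by (now rewrite Cmult_1_l).
apply (is_derive_proj_along_line P (u, v)); try easy.
- now rewrite Cmod_R, Rabs_R1.
- intros t; apply injective_projections; simpl; ring.
Qed.

Lemma Derive_v_proj (P : C -> C) (q : C) (th u v : R) :
  is_derive (K := C_AbsRing) P (u, v) q ->
  Derive (fun t => proj th (P (u, t))) v = proj th (Ci * q).
Proof.
intros HP; apply is_derive_unique.
apply (is_derive_proj_along_line P (u, v)); try easy.
- unfold Cmod, Ci; simpl; replace (0 * (0 * 1) + 1 * (1 * 1)) with 1 by ring; exact sqrt_1.
- intros t; apply injective_projections; simpl; ring.
Qed.

Section SecondPartials.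
Variables (U : C -> Prop) (P Q : C -> C) (q' : C) (th u v : R).
Hypothesis U_open : open U.
Hypothesis U_uv : U (u, v).
Hypothesis P_primitive : forall z, U z -> is_derive (K := C_AbsRing) P z (Q z).
Hypothesis Q_derive : is_derive (K := C_AbsRing) Q (u, v) q'.

Lemma near_u_in_U : locally u (fun s => U (s, v)).
Proof.
destruct (U_open (u, v) U_uv) as [e He]; exists e; intros s Hs.
apply He; split; [exact Hs | apply ball_center].
Qed.

Lemma near_v_in_U : locally v (fun s => U (u, s)).
Proof.
destruct (U_open (u, v) U_uv) as [e He]; exists e; intros s Hs.
apply He; split; [apply ball_center | exact Hs].
Qed.

Lemma Derive_uu_proj :
  Derive (fun s => Derive (fun t => proj th (P (t, v))) s) u = proj th q'.
Proof.
rewrite (Derive_ext_loc _ (fun s => proj th (Q (s, v)))).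
- now apply Derive_u_proj.
- generalize near_u_in_U; apply filter_imp; intros s Hs.
  now apply Derive_u_proj, P_primitive.
Qed.

Lemma Derive_uv_proj :
  Derive (fun s => Derive (fun t => proj th (P (t, s))) u) v = proj th (Ci * q').
Proof.
rewrite (Derive_ext_loc _ (fun s => proj th (Q (u, s)))).
- now apply Derive_v_proj.
- generalize near_v_in_U; apply filter_imp; intros s Hs.
  now apply Derive_u_proj, P_primitive.
Qed.

Lemma Derive_vv_proj :
  Derive (fun s => Derive (fun t => proj th (P (u, t))) s) v = proj th (Ci * (Ci * q')).
Proof.
rewrite (Derive_ext_loc _ (fun s => proj th ((fun w => Ci * Q w)%C (u, s)))).
- now apply (Derive_v_proj (fun w => Ci * Q w)%C), is_derive_C_Ci_mult.
- generalize near_v_in_U; apply filter_imp; intros s Hs.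
  now apply Derive_v_proj, P_primitive.
Qed.

End SecondPartials.

Definition proj3 (th : R) (a b c : C) : vec3 := (proj th a, proj th b, proj th c).

Section SurfaceJet.
Variables (U : C -> Prop) (P1 P2 P3 Q1 Q2 Q3 : C -> C) (r1 r2 r3 : C) (th u v : R).
Hypothesis U_open : open U.
Hypothesis U_uv : U (u, v).
Hypothesis P1_primitive : forall z, U z -> is_derive (K := C_AbsRing) P1 z (Q1 z).
Hypothesis P2_primitive : forall z, U z -> is_derive (K := C_AbsRing) P2 z (Q2 z).
Hypothesis P3_primitive : forall z, U z -> is_derive (K := C_AbsRing) P3 z (Q3 z).
Hypothesis Q1_derive : is_derive (K := C_AbsRing) Q1 (u, v) r1.
Hypothesis Q2_derive : is_derive (K := C_AbsRing) Q2 (u, v) r2.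
Hypothesis Q3_derive : is_derive (K := C_AbsRing) Q3 (u, v) r3.

Let x := xsurf th P1 P2 P3.

Lemma pu_xsurf : pu x u v = proj3 th (Q1 (u, v)) (Q2 (u, v)) (Q3 (u, v)).
Proof.
unfold pu, proj3; repeat f_equal;
  [apply (Derive_u_proj P1) | apply (Derive_u_proj P2) | apply (Derive_u_proj P3)]; auto.
Qed.

Lemma pv_xsurf :
  pv x u v = proj3 th (Ci * Q1 (u, v)) (Ci * Q2 (u, v)) (Ci * Q3 (u, v)).
Proof.
unfold pv, proj3; repeat f_equal;
  [apply (Derive_v_proj P1) | apply (Derive_v_proj P2) | apply (Derive_v_proj P3)]; auto.
Qed.

Lemma puu_xsurf : pu (pu x) u v = proj3 th r1 r2 r3.
Proof.
unfold pu at 1, proj3; repeat f_equal;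
  [apply (Derive_uu_proj U P1 Q1) | apply (Derive_uu_proj U P2 Q2)
  | apply (Derive_uu_proj U P3 Q3)]; auto.
Qed.

Lemma puv_xsurf : pv (pu x) u v = proj3 th (Ci * r1) (Ci * r2) (Ci * r3).
Proof.
unfold pv, proj3; repeat f_equal;
  [apply (Derive_uv_proj U P1 Q1) | apply (Derive_uv_proj U P2 Q2)
  | apply (Derive_uv_proj U P3 Q3)]; auto.
Qed.

Lemma pvv_xsurf :
  pv (pv x) u v = proj3 th (Ci * (Ci * r1)) (Ci * (Ci * r2)) (Ci * (Ci * r3)).
Proof.
unfold pv at 1, proj3; repeat f_equal;
  [apply (Derive_vv_proj U P1 Q1) | apply (Derive_vv_proj U P2 Q2)
  | apply (Derive_vv_proj U P3 Q3)]; auto.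
Qed.

Lemma xsurf_jet :
  pu x u v = proj3 th (Q1 (u, v)) (Q2 (u, v)) (Q3 (u, v)) /\
  pv x u v = proj3 th (Ci * Q1 (u, v)) (Ci * Q2 (u, v)) (Ci * Q3 (u, v)) /\
  pu (pu x) u v = proj3 th r1 r2 r3 /\
  pv (pu x) u v = proj3 th (Ci * r1) (Ci * r2) (Ci * r3) /\
  pv (pv x) u v = proj3 th (Ci * (Ci * r1)) (Ci * (Ci * r2)) (Ci * (Ci * r3)).
Proof.
split; [exact pu_xsurf|]; split; [exact pv_xsurf|]; split; [exact puu_xsurf|].
split; [exact puv_xsurf | exact pvv_xsurf].
Qed.

End SurfaceJet.

Lemma minimal_normal_eq (x : R -> R -> vec3) (u v : R) (N : vec3) :
  v1c (pu x u v) * v2c (pv x u v) - v2c (pu x u v) * v1c (pv x u v) <> 0 ->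
  is_minimal_normal x u v N -> minimal_normal x u v = N.
Proof.
intros Hdet HN.
pose proof (epsilon_spec (inhabits ((0, 0, 1) : vec3)) (is_minimal_normal x u v)
              (ex_intro _ N HN)) as HM.
fold (minimal_normal x u v) in HM.
unfold is_minimal_normal in HM, HN.
destruct (minimal_normal x u v) as [[a b] c], N as [[a' b'] c'].
destruct (pu x u v) as [[A1 B1] C1], (pv x u v) as [[A2 B2] C2].
destruct HM as [Hc [Hu Hv]], HN as [Hc' [Hu' Hv']].
unfold edot, v1c, v2c, v3c in *; simpl in *; subst c c'.
assert (Ha : (a - a') * (A1 * B2 - B1 * A2) = 0).
{ transitivity (B2 * (a * A1 + b * B1 + 1 * C1) - B2 * (a' * A1 + b' * B1 + 1 * C1)
     - B1 * (a * A2 + b * B2 + 1 * C2) + B1 * (a' * A2 + b' * B2 + 1 * C2)); [ring|].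
  rewrite Hu, Hu', Hv, Hv'; ring. }
assert (Hb : (b - b') * (A1 * B2 - B1 * A2) = 0).
{ transitivity (A1 * (a * A2 + b * B2 + 1 * C2) - A1 * (a' * A2 + b' * B2 + 1 * C2)
     - A2 * (a * A1 + b * B1 + 1 * C1) + A2 * (a' * A1 + b' * B1 + 1 * C1)); [ring|].
  rewrite Hu, Hu', Hv, Hv'; ring. }
apply Rmult_integral in Ha, Hb.
destruct Ha as [Ha|]; [|contradiction]; destruct Hb as [Hb|]; [|contradiction].
f_equal; f_equal; lra.
Qed.

Section WeierstrassData.
Variables (U : C -> Prop) (F G P1 P2 P3 : C -> C).
Hypothesis U_open : open U.
Hypothesis F_holo : holomorphic_on U F.
Hypothesis G_holo : holomorphic_on U G.
Hypothesis F_nonzero : forall z, U z -> F z <> 0%C.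
Hypothesis P_primitive : forall z, U z ->
  is_derive (K := C_AbsRing) P1 z (F z) /\
  is_derive (K := C_AbsRing) P2 z (Ci * F z)%C /\
  is_derive (K := C_AbsRing) P3 z (- (F z * G z))%C.

Lemma fundamental_forms (th u v : R) : U (u, v) ->
  let x := xsurf th P1 P2 P3 in
  let K := (emi th * F (u, v) * C_derive G (u, v))%C in
  g11 x u v = Cmod (F (u, v)) ^ 2 /\ g12 x u v = 0 /\ g22 x u v = Cmod (F (u, v)) ^ 2 /\
  h11 x u v = - Re K /\ h12 x u v = Im K /\ h22 x u v = Re K.
Proof.
intros Huv x K.
pose proof (C_derive_correct F (u, v) 0 (F_holo _ Huv)) as F_derive.
pose proof (C_derive_correct G (u, v) 0 (G_holo _ Huv)) as G_derive.
destruct (xsurf_jet U P1 P2 P3 F (fun w => Ci * F w)%C (fun w => - (F w * G w))%C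
  (C_derive F (u, v)) (Ci * C_derive F (u, v))%C
  (- (C_derive F (u, v) * G (u, v) + F (u, v) * C_derive G (u, v)))%C th u v U_open Huv)
  as [Epu [Epv [Epuu [Epuv Epvv]]]];
  try (intros z Hz; apply (P_primitive z Hz)).
- exact F_derive.
- now apply is_derive_C_Ci_mult.
- now apply is_derive_C_opp_mult.
assert (Fpos : 0 < Cmod (F (u, v)) ^ 2)
  by (apply pow_lt, Cmod_gt_0, F_nonzero, Huv).
(* x_u, x_v have horizontal parts (A, B), (B, -A) with A^2 + B^2 = |F|^2 > 0. *)
assert (normal : minimal_normal x u v = (Re (G (u, v)), Im (G (u, v)), 1)).
{ apply minimal_normal_eq; unfold x, is_minimal_normal, edot;
    rewrite Epu, Epv; unfold proj3, v1c, v2c, v3c; cbn [fst snd].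
  - rewrite proj_Ci_Ci; rewrite <- (proj_pair_norm th) in Fpos; nra.
  - unfold proj, Ci, Re, Im; destruct (F (u, v)) as [f1 f2], (G (u, v)) as [g1 g2]; simpl.
    repeat split; ring. }
unfold K, g11, g12, g22, h11, h12, h22, idot, edot; rewrite normal; unfold x.
rewrite Epu, Epv, Epuu, Epuv, Epvv; unfold proj3, v1c, v2c, v3c; cbn [fst snd].
rewrite proj_Ci_Ci, <- (proj_pair_norm th (F (u, v))).
repeat split; try ring.
all: unfold proj, emi, Ci, Re, Im; destruct (F (u, v)) as [f1 f2], (G (u, v)) as [g1 g2],
  (C_derive F (u, v)) as [d1 d2], (C_derive G (u, v)) as [e1 e2]; simpl; ring.
Qed.

End WeierstrassData.

Lemma second_form_of_K (x : R -> R -> vec3) (u v a b : R) (K : C) :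
  h11 x u v = - Re K -> h12 x u v = Im K -> h22 x u v = Re K ->
  II x u v a b = - Re (K * ((a, b) * (a, b))) /\
  (h11 x u v * a + h12 x u v * b) * b - (h12 x u v * a + h22 x u v * b) * a
    = - Im (K * ((a, b) * (a, b))).
Proof.
intros E11 E12 E22; unfold II; rewrite E11, E12, E22.
destruct K as [k1 k2]; unfold Re, Im; simpl; split; ring.
Qed.

Lemma eigenvector_iff_cross (p q r a b : R) : (a, b) <> (0, 0) ->
  (exists lam, p * a + q * b = lam * a /\ q * a + r * b = lam * b) <->
  (p * a + q * b) * b - (q * a + r * b) * a = 0.
Proof.
intros Hab; split.
- intros [lam [E1 E2]]; rewrite E1, E2; ring.
- intros Hcross; destruct (Req_dec a 0) as [Ha|Ha].
  + subst a; assert (Hb : b <> 0) by (intros ->; apply Hab; reflexivity).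
    exists r; split; [|ring].
    assert (Hq : q * (b * b) = 0) by (rewrite <- Hcross; ring).
    apply Rmult_integral in Hq; destruct Hq as [->|Hbb]; [ring|].
    apply Rmult_integral in Hbb; tauto.
  + exists ((p * a + q * b) / a); split; [field; exact Ha|].
    apply (Rmult_eq_reg_r a); [|exact Ha].
    transitivity ((p * a + q * b) * b); [lra | field; exact Ha].
Qed.

Lemma principal_conformal (x : R -> R -> vec3) (u v a b n : R) :
  0 < n -> g11 x u v = n -> g12 x u v = 0 -> g22 x u v = n -> (a, b) <> (0, 0) ->
  (principal x u v a b <->
   (h11 x u v * a + h12 x u v * b) * b - (h12 x u v * a + h22 x u v * b) * a = 0).
Proof.
intros Hn E11 E12 E22 Hab.
assert (shape : S11 x u v = h11 x u v / n /\ S12 x u v = h12 x u v / n /\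
                S21 x u v = h12 x u v / n /\ S22 x u v = h22 x u v / n).
{ unfold S11, S12, S21, S22, detg; rewrite E11, E12, E22.
  repeat split; field; lra. }
unfold principal; destruct shape as (-> & -> & -> & ->).
rewrite (eigenvector_iff_cross _ _ _ a b Hab).
split; [intros [_ Hcross] | intros Hcross; split; [exact Hab|]].
- replace (_ - _) with (n * ((h11 x u v / n * a + h12 x u v / n * b) * b
     - (h12 x u v / n * a + h22 x u v / n * b) * a)) by (field; lra).
  rewrite Hcross; ring.
- replace (_ - _) with (((h11 x u v * a + h12 x u v * b) * b
     - (h12 x u v * a + h22 x u v * b) * a) / n) by (field; lra).
  rewrite Hcross; field; lra.
Qed.

Lemma emi_quarter_turn (th : R) (w : C) :
  Re (emi (th + PI / 2) * w) = Im (emi th * w) /\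
  Im (emi (th + PI / 2) * w) = - Re (emi th * w).
Proof.
unfold emi; rewrite cos_plus, sin_plus, cos_PI2, sin_PI2.
destruct w as [w1 w2]; unfold Re, Im; simpl; split; ring.
Qed.

Theorem mainTheorem9 (U : C -> Prop) (F G P1 P2 P3 : C -> C) :
  open U ->
  holomorphic_on U F -> holomorphic_on U G ->
  (forall z, U z -> F z <> 0%C) ->
  (forall z, U z ->
     is_derive (K := C_AbsRing) P1 z (F z) /\
     is_derive (K := C_AbsRing) P2 z (Ci * F z)%C /\
     is_derive (K := C_AbsRing) P3 z (- (F z * G z))%C) ->
  (* (i) *)
  (forall th u v, U (u, v) ->
     g11 (xsurf th P1 P2 P3) u v = Cmod (F (u, v)) ^ 2 /\
     g12 (xsurf th P1 P2 P3) u v = 0 /\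
     g22 (xsurf th P1 P2 P3) u v = Cmod (F (u, v)) ^ 2) /\
  (* (ii) *)
  (forall th u v a b, U (u, v) -> (a, b) <> (0, 0) ->
     (asymptotic (xsurf th P1 P2 P3) u v a b <->
      Re (emi th * F (u, v) * C_derive G (u, v) * ((a, b) * (a, b)))%C = 0)) /\
  (* (iii) *)
  (forall th u v a b, U (u, v) -> (F (u, v) * C_derive G (u, v))%C <> 0%C ->
     (a, b) <> (0, 0) ->
     (principal (xsurf th P1 P2 P3) u v a b <->
      Im (emi th * F (u, v) * C_derive G (u, v) * ((a, b) * (a, b)))%C = 0)) /\
  (* (iv) *)
  (forall th u v a b, U (u, v) -> (F (u, v) * C_derive G (u, v))%C <> 0%C ->
     (a, b) <> (0, 0) ->
     (asymptotic (xsurf th P1 P2 P3) u v a b ->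
        principal (xsurf (th + PI / 2) P1 P2 P3) u v a b) /\
     (principal (xsurf th P1 P2 P3) u v a b ->
        asymptotic (xsurf (th + PI / 2) P1 P2 P3) u v a b)).
Proof.
intros HU HF HG HF0 HP.
pose proof (fundamental_forms U F G P1 P2 P3 HU HF HG HF0 HP) as forms.
assert (asym : forall th u v a b, U (u, v) ->
  (asymptotic (xsurf th P1 P2 P3) u v a b <->
   Re (emi th * F (u, v) * C_derive G (u, v) * ((a, b) * (a, b)))%C = 0)).
{ intros th u v a b Huv.
  destruct (forms th u v Huv) as (_ & _ & _ & E11 & E12 & E22).
  unfold asymptotic; rewrite (proj1 (second_form_of_K _ u v a b _ E11 E12 E22)); lra. }
assert (princ : forall th u v a b, U (u, v) -> (a, b) <> (0, 0) ->
  (principal (xsurf th P1 P2 P3) u v a b <->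
   Im (emi th * F (u, v) * C_derive G (u, v) * ((a, b) * (a, b)))%C = 0)).
{ intros th u v a b Huv Hab.
  destruct (forms th u v Huv) as (G11 & G12 & G22 & E11 & E12 & E22).
  assert (Fpos : 0 < Cmod (F (u, v)) ^ 2) by now apply pow_lt, Cmod_gt_0, HF0.
  rewrite (principal_conformal _ u v a b _ Fpos G11 G12 G22 Hab).
  rewrite (proj2 (second_form_of_K _ u v a b _ E11 E12 E22)); lra. }
split; [|split; [|split]].
- intros th u v Huv; destruct (forms th u v Huv) as (G11 & G12 & G22 & _); tauto.
- intros th u v a b Huv _; exact (asym th u v a b Huv).
- intros th u v a b Huv _ Hab; exact (princ th u v a b Huv Hab).
- intros th u v a b Huv _ Hab.
  rewrite (asym th), (princ th), (asym (th + PI / 2)), (princ (th + PI / 2)) by assumption.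
  (* Re and Im of K (a+ib)^2 trade places between th and th + pi/2. *)
  rewrite <- !Cmult_assoc.
  destruct (emi_quarter_turn th (F (u, v) * (C_derive G (u, v) * ((a, b) * (a, b)))))
    as [ERe EIm].
  rewrite ERe, EIm; split; intros E; lra.
Qed.
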